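(* Let $A=\mathbb{S}\mathbb{O}$, $f\in\mathcal{S}(\Omega)$ and $x\in\Omega$. Then one of the following possibilities applies: (1) $V(f)\cap\mathbb{S}_x=\emptyset$; (2) $V(f)\cap\mathbb{S}_x=\{y\}$, $f'_s(x)\in C_A^*=\mathbb{S}\mathbb{O}\setminus n^{-1}(0)$ and $y=\mathrm{re}(x)-f^\circ_s(x)f'_s(x)^{-1}$; (3) $V(f)\cap\mathbb{S}_x$ is an affine $2$-plane in $\mathbb{S}\mathbb{O}\simeq\mathbb{R}^8$ and $f'_s(x)$ is a zero divisor (i.e., it is a nonzero element of $n^{-1}(0)$); (4) $V(f)\supseteq\mathbb{S}_x$ and $f'_s(x)=0$. In each of these cases, respectively: (1) either $V(N(f))\cap\mathbb{S}_x=\emptyset=V(f^c)\cap\mathbb{S}_x$; or $V(N(f))\supseteq\mathbb{S}_x$ and $V(f^c)\cap\mathbb{S}_x$ is either empty or $2$-dimensional; (2) $V(N(f))\supseteq\mathbb{S}_x$ and $V(f^c)\cap\mathbb{S}_x=\{f'_s(x)^{-1}y^cf'_s(x)\}$; (3) $V(N(f))\supseteq\mathbb{S}_x$ and $V(f^c)\cap\mathbb{S}_x$ is either empty or $2$-dimensional; (4) $\mathbb{S}_x$ is included both in $V(f^c)$ and in $V(N(f))$.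
   Context: $\mathbb{S}\mathbb{O}$ (split-octonions) is the real algebra $\mathbb{H}+l\mathbb{H}$ ($\mathbb{H}$ the quaternions) with product determined by $(lp)(lq)=qp^c$, $p(lq)=l(p^cq)$, $(lp)q=l(qp)$ for $p,q\in\mathbb{H}$ ($p^c$ the quaternionic conjugate), and $^*$-involution $(p+lq)^c=p^c-lq$; it is an alternative $^*$-algebra with norm $n(x)=xx^c$, $n(p+lq)=n(p)-n(q)$. For a real finite-dimensional unital alternative $^*$-algebra $A$: $t(x)=x+x^c$; center $=\{r:(r,a,b)=0,\ ra=ar\ \forall a,b\}$; $C_A=\{0\}\cup\{a:n(a),n(a^c)$ invertible elements of the center$\}$, $C_A^*=C_A\setminus\{0\}$. $\mathbb{S}_A=\{J:t(J)=0,n(J)=1\}$, $Q_A=\mathbb{R}\cup\{x:t(x),n(x)\in\mathbb{R},4n(x)>t(x)^2\}$; every $x\in Q_A$ is $\alpha+\beta J$ ($\alpha,\beta\in\mathbb{R}$, $J\in\mathbb{S}_A$), $x^c=\alpha-\beta J$, $\mathrm{re}(x)=t(x)/2$, $\mathrm{im}(x)=x-\mathrm{re}(x)$, $\mathbb{S}_x=\{\alpha+\beta I:I\in\mathbb{S}_A\}$. Let $D\subseteq\mathbb{C}$ be non-empty, invariant under conjugation, $\Omega=\{\alpha+\beta J:\alpha+i\beta\in D,J\in\mathbb{S}_A\}$. $A_{\mathbb{C}}=\{a+\imath b\}$ with $(a+\imath b)(a'+\imath b')=aa'-bb'+\imath(ab'+ba')$, $\overline{a+\imath b}=a-\imath b$,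 $(a+\imath b)^c=a^c+\imath b^c$. A stem function $F=F_1+\imath F_2:D\to A_{\mathbb{C}}$ satisfies $F(\bar z)=\overline{F(z)}$ and induces the slice function $f=\mathcal{I}(F)$, $f(\alpha+\beta J)=F_1(\alpha+i\beta)+JF_2(\alpha+i\beta)$; $\mathcal{S}(\Omega)$ is the set of these. $f\cdot g=\mathcal{I}(FG)$, $f^c=\mathcal{I}(F^c)$ with $F^c(z)=F(z)^c$, $N(f)=f\cdot f^c$. $V(h)=\{x:h(x)=0\}$. $f^\circ_s(x)=\frac12(f(x)+f(x^c))$, $f'_s(x)=\frac12\mathrm{im}(x)^{-1}(f(x)-f(x^c))$ for $x\notin\mathbb{R}$ (and $f'_s(x):=0$ is not defined for real $x$; for real $x$ only cases (1),(4)-type statements about $\{x\}=\mathbb{S}_x$ are meaningful). *)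

From HB Require Import structures.
From mathcomp Require Import all_boot all_order all_algebra.
From mathcomp Require Import boolp classical_sets reals.
Set Implicit Arguments. Unset Strict Implicit. Unset Printing Implicit Defensive.
Import Order.TTheory GRing.Theory Num.Theory.
Local Open Scope ring_scope.
Local Open Scope classical_set_scope.

Section SplitOctonions.
Variable R : realType.

Record quat := Quat { q0 : R; q1 : R; q2 : R; q3 : R }.

Definition qzero := Quat 0 0 0 0.
Definition qadd (p q : quat) :=
  Quat (q0 p + q0 q) (q1 p + q1 q) (q2 p + q2 q) (q3 p + q3 q).
Definition qopp (p : quat) := Quat (- q0 p) (- q1 p) (- q2 p) (- q3 p).
Definition qscale (r : R) (p : quat) :=
  Quat (r * q0 p) (r * q1 p) (r * q2 p) (r * q3 p).
(* Hamilton product, i^2 = j^2 = k^2 = ijk = -1 *)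
Definition qmul (p q : quat) :=
  Quat (q0 p * q0 q - q1 p * q1 q - q2 p * q2 q - q3 p * q3 q)
       (q0 p * q1 q + q1 p * q0 q + q2 p * q3 q - q3 p * q2 q)
       (q0 p * q2 q - q1 p * q3 q + q2 p * q0 q + q3 p * q1 q)
       (q0 p * q3 q + q1 p * q2 q - q2 p * q1 q + q3 p * q0 q).
Definition qconj (p : quat) := Quat (q0 p) (- q1 p) (- q2 p) (- q3 p).

(** Split-octonions SO = H + lH; [SO p q] stands for p + l q. *)
Record so := SO { sp : quat; sq : quat }.

Definition sozero := SO qzero qzero.
Definition soreal (r : R) := SO (Quat r 0 0 0) qzero.
Definition soadd (x y : so) := SO (qadd (sp x) (sp y)) (qadd (sq x) (sq y)).
Definition soopp (x : so) := SO (qopp (sp x)) (qopp (sq x)).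
Definition sosub (x y : so) := soadd x (soopp y).
Definition soscale (r : R) (x : so) := SO (qscale r (sp x)) (qscale r (sq x)).
(* (p + lq)(p' + lq') = pp' + q' q^c + l(p^c q' + p' q), which is the product
   determined by (lp)(lq) = q p^c, p(lq) = l(p^c q), (lp)q = l(q p). *)
Definition somul (x y : so) :=
  SO (qadd (qmul (sp x) (sp y)) (qmul (sq y) (qconj (sq x))))
     (qadd (qmul (qconj (sp x)) (sq y)) (qmul (sp y) (sq x))).
Definition soconj (x : so) := SO (qconj (sp x)) (qopp (sq x)).

Definition sot (x : so) := soadd x (soconj x).
Definition son (x : so) := somul x (soconj x).

(* the real number r with n(x) = r (meaningful when n(x) is real; for SO
   one has n(p + lq) = n(p) - n(q) in R) *)
Definition sonr (x : so) := q0 (sp (son x)).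

Definition soinv (x : so) := soscale (sonr x)^-1 (soconj x).

Definition is_real_so (x : so) : Prop := exists r : R, x = soreal r.

Definition sore (x : so) := soscale (2^-1) (sot x).
Definition soim (x : so) := sosub x (sore x).

Definition SA : set so := [set J | sot J = sozero /\ son J = soreal 1].

Definition sopt (a b : R) (J : so) := soadd (soreal a) (soscale b J).

(* S_x for x = alpha + beta J:  {alpha + beta I : I in S_A} *)
Definition sphere (a b : R) : set so := [set sopt a b I | I in SA].

Definition V (h : so -> so) : set so := [set y | h y = sozero].

Definition affine_2plane (S : set so) : Prop :=
  exists p u v : so,
    (forall r s : R, soadd (soscale r u) (soscale s v) = sozero -> r = 0 /\ s = 0)
    /\ S = [set soadd p (soadd (soscale r u) (soscale s v)) | r in [set: R] & s in [set: R]].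

(** Complexification A_C: pairs (a, b) standing for a + i b.
    Stem functions are defined on D \subseteq C, with C identified with R * R
    (alpha + i beta ~ (alpha, beta)). *)
Definition soC := (so * so)%type.
Definition ACbar (z : soC) : soC := (z.1, soopp z.2).
Definition ACmul (z w : soC) : soC :=
  (sosub (somul z.1 w.1) (somul z.2 w.2), soadd (somul z.1 w.2) (somul z.2 w.1)).
Definition ACconj (z : soC) : soC := (soconj z.1, soconj z.2).

Definition conj_invariant (D : set (R * R)) : Prop :=
  forall a b, D (a, b) -> D (a, - b).

Definition stem (D : set (R * R)) (F : R -> R -> soC) : Prop :=
  forall a b, D (a, b) -> F a (- b) = ACbar (F a b).

Definition stem_mul (F G : R -> R -> soC) : R -> R -> soC :=
  fun a b => ACmul (F a b) (G a b).
Definition stem_conj (F : R -> R -> soC) : R -> R -> soC :=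
  fun a b => ACconj (F a b).

(* Induced slice function I(F): f(alpha + beta J) = F1(alpha + i beta) + J F2(alpha + i beta).
   A point y of Q_A is written canonically as alpha + beta J with
   alpha = re(y), beta = sqrt(n(y) - alpha^2) >= 0 and J = beta^{-1} im(y);
   by the stem condition this agrees with every other representation
   alpha + beta J (= alpha + (-beta)(-J)), and for real y (beta = 0)
   F2(alpha, 0) = 0.  Outside Omega the value is irrelevant. *)
Definition sliceI (F : R -> R -> soC) (y : so) : so :=
  let a := q0 (sp y) in
  let b := Num.sqrt (sonr y - a ^+ 2) in
  let J := soscale b^-1 (soim y) in
  soadd (F a b).1 (somul J (F a b).2).

Definition sph_value (f : so -> so) (x : so) : so :=
  soscale (2^-1) (soadd (f x) (f (soconj x))).
Definition sph_deriv (f : so -> so) (x : so) : so :=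
  soscale (2^-1) (somul (soinv (soim x)) (sosub (f x) (f (soconj x)))).

End SplitOctonions.

(* On the sphere S_x = {a + bI : I in S_A} the slice function induced by F is affine in
   the imaginary unit: f(a + bI) = e + I c with (e, c) = F(a + ib); hence f°_s(x) = e,
   f'_s(x) = c / b, f^c(a + bI) = e^c + I c^c and N(f)(a + bI) = n(e) - n(c) + t(e c^c) I.
   So V(f) ∩ S_x is the image of Z(e, c) = {I in S_A : e + I c = 0}.  Every I in Z(e, c)
   forces n(e) = n(c) and t(e c^c) = 0, which is exactly the vanishing of N(f) on S_x, and
   these conditions do not change when (e, c) is replaced by (e^c, c^c).  If n(c) != 0,
   Z(e, c) is at most the point -n(c)^-1 e c^c; if c = 0 it is empty or all of S_A.  If
   c = p + lq != 0 is a zero divisor, then n(p) = n(q) != 0, the right annihilator of c is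
   4-dimensional and totally isotropic, and Z(e, c) = I0 + {k : k c = 0, re k = 0,
   t(I0 k^c) = 0} is cut out of it by two independent linear conditions. *)

From HB Require Import structures.
From mathcomp Require Import all_boot all_order all_algebra.
From mathcomp Require Import boolp classical_sets reals.
From mathcomp Require Import ring lra.
Import Order.TTheory GRing.Theory Num.Theory.
Set Implicit Arguments. Unset Strict Implicit. Unset Printing Implicit Defensive.
Local Open Scope ring_scope.
Local Open Scope classical_set_scope.

Lemma quat_ext (R : realType) (x y : quat R) :
  q0 x = q0 y -> q1 x = q1 y -> q2 x = q2 y -> q3 x = q3 y -> x = y.
Proof. by case: x => ????; case: y => ???? /= -> -> -> ->. Qed.

Lemma so_ext (R : realType) (x y : so R) : sp x = sp y -> sq x = sq y -> x = y.
Proof. by case: x; case: y => ???? /= -> ->. Qed.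

Ltac destruct_so := repeat match goal with
  | x : so _ |- _ => destruct x as [[? ? ? ?] [? ? ? ?]]
  | x : quat _ |- _ => destruct x as [? ? ? ?] end.

Ltac so_ring := intros; destruct_so;
  try apply: so_ext; try apply: quat_ext; rewrite /sonr /=; ring.

Definition sopolar (R : realType) (x y : so R) := q0 (sp (sot (somul x (soconj y)))).

Section SplitOctonionAlgebra.
Variable R : realType.
Implicit Types (x y z : so R) (k l : R).

Lemma soadd0l x : soadd (sozero R) x = x. Proof. so_ring. Qed.
Lemma soadd0r x : soadd x (sozero R) = x. Proof. so_ring. Qed.
Lemma soreal0 : soreal 0 = sozero R. Proof. so_ring. Qed.
Lemma soscale0 x : soscale 0 x = sozero R. Proof. so_ring. Qed.
Lemma soscalex0 k : soscale k (sozero R) = sozero R. Proof. so_ring. Qed.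
Lemma soscale1 x : soscale 1 x = x. Proof. so_ring. Qed.
Lemma soscaleN1 x : soscale (-1) x = soopp x. Proof. so_ring. Qed.
Lemma soscaleA k l x : soscale k (soscale l x) = soscale (k * l) x. Proof. so_ring. Qed.
Lemma sooppK x : soopp (soopp x) = x. Proof. so_ring. Qed.
Lemma soopp0 : soopp (sozero R) = sozero R. Proof. so_ring. Qed.
Lemma soconj0 : soconj (sozero R) = sozero R. Proof. so_ring. Qed.
Lemma soconjK x : soconj (soconj x) = x. Proof. so_ring. Qed.
Lemma soconjN x : soconj (soopp x) = soopp (soconj x). Proof. so_ring. Qed.
Lemma soconjZ k x : soconj (soscale k x) = soscale k (soconj x). Proof. so_ring. Qed.
Lemma soconjM x y : soconj (somul x y) = somul (soconj y) (soconj x). Proof. so_ring. Qed.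
Lemma somul0r x : somul x (sozero R) = sozero R. Proof. so_ring. Qed.
Lemma somulNl x y : somul (soopp x) y = soopp (somul x y). Proof. so_ring. Qed.
Lemma somulNr x y : somul x (soopp y) = soopp (somul x y). Proof. so_ring. Qed.
Lemma somulZl k x y : somul (soscale k x) y = soscale k (somul x y). Proof. so_ring. Qed.
Lemma somulZr k x y : somul x (soscale k y) = soscale k (somul x y). Proof. so_ring. Qed.
Lemma somul_reall k x : somul (soreal k) x = soscale k x. Proof. so_ring. Qed.
Lemma somul_realr k x : somul x (soreal k) = soscale k x. Proof. so_ring. Qed.
Lemma somulDl x y z : somul (soadd x y) z = soadd (somul x z) (somul y z). Proof. so_ring. Qed.
Lemma somulBl x y z : somul (sosub x y) z = sosub (somul x z) (somul y z). Proof. so_ring. Qed.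
Lemma sosubrr x : sosub x x = sozero R. Proof. so_ring. Qed.
Lemma soaddNl x : soadd (soopp x) x = sozero R. Proof. so_ring. Qed.
Lemma sosubKC x y : soadd y (sosub x y) = x. Proof. so_ring. Qed.
Lemma soadd_pm x y : soadd (soadd x y) (soadd x (soopp y)) = soscale 2 x. Proof. so_ring. Qed.
Lemma sosub_pm x y : sosub (soadd x y) (soadd x (soopp y)) = soscale 2 y. Proof. so_ring. Qed.

Lemma somul_altl x y : somul x (somul x y) = somul (somul x x) y. Proof. so_ring. Qed.
Lemma somul_mulconj x y : somul (somul x y) (soconj y) = soscale (sonr y) x. Proof. so_ring. Qed.
Lemma somul_conjmul x y : somul (somul x (soconj y)) y = soscale (sonr y) x. Proof. so_ring. Qed.
Lemma somul_sqr x : somul x x = soadd (somul (sot x) x) (soopp (son x)). Proof. so_ring. Qed.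

Lemma re_soadd x y : q0 (sp (soadd x y)) = q0 (sp x) + q0 (sp y). Proof. by []. Qed.
Lemma re_soscale k x : q0 (sp (soscale k x)) = k * q0 (sp x). Proof. by []. Qed.

Lemma son_real x : son x = soreal (sonr x). Proof. so_ring. Qed.
Lemma sot_real x : sot x = soreal (q0 (sp x) + q0 (sp x)). Proof. so_ring. Qed.
Lemma soconj_sot x : soconj x = soadd (sot x) (soopp x). Proof. so_ring. Qed.
Lemma sot_mul_conj x y : sot (somul x (soconj y)) = soreal (sopolar x y).
Proof. rewrite /sopolar; so_ring. Qed.

Lemma sonrM x y : sonr (somul x y) = sonr x * sonr y. Proof. so_ring. Qed.
Lemma sonrN x : sonr (soopp x) = sonr x. Proof. so_ring. Qed.
Lemma sonr_conj x : sonr (soconj x) = sonr x. Proof. so_ring. Qed.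
Lemma sonrZ k x : sonr (soscale k x) = k ^+ 2 * sonr x. Proof. so_ring. Qed.
Lemma sonr0 : sonr (sozero R) = 0. Proof. so_ring. Qed.
Lemma sonrD x y : sonr (soadd x y) = sonr x + sopolar x y + sonr y.
Proof. rewrite /sopolar; so_ring. Qed.
Lemma sopolar_conj x y : sopolar (soconj x) (soconj y) = sopolar x y.
Proof. rewrite /sopolar; so_ring. Qed.
Lemma sopolar0 : sopolar (sozero R) (sozero R) = 0. Proof. rewrite /sopolar; so_ring. Qed.

Lemma soinvZ k x : k != 0 -> soinv (soscale k x) = soscale k^-1 (soinv x).
Proof.
move=> hk; rewrite /soinv sonrZ soconjZ !soscaleA; congr soscale.
by rewrite invfM mulrAC -mulrA expr2 invfM mulrA mulfVK.
Qed.

Lemma soadd_eq0 x y : soadd x y = sozero R -> x = soopp y.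
Proof.
move=> h; have -> : x = soadd (soadd x y) (soopp y) by so_ring.
by rewrite h soadd0l.
Qed.

Lemma soeqN_eq0 x : x = soopp x -> x = sozero R.
Proof. destruct_so => -[] *; apply: so_ext; apply: quat_ext => /=; lra. Qed.

Lemma soscale_eq0 k x : k != 0 -> soscale k x = sozero R -> x = sozero R.
Proof. by move=> k0 h; rewrite -[x]soscale1 -(mulVf k0) -soscaleA h soscalex0. Qed.

Lemma soconj_eq0 x : soconj x = sozero R -> x = sozero R.
Proof. by move/(congr1 (@soconj R)); rewrite soconjK soconj0. Qed.

Lemma soreal_eq0 k : soreal k = sozero R -> k = 0.
Proof. by move/(congr1 (fun z => q0 (sp z))). Qed.

Lemma son_eq0 x : (son x = sozero R) <-> sonr x = 0.
Proof. by rewrite son_real; split => [/soreal_eq0|->]; rewrite ?soreal0. Qed.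

End SplitOctonionAlgebra.

Section ImaginaryUnits.
Variable R : realType.
Implicit Types (I J x c : so R) (a b : R).

Lemma SA_re I : SA I -> q0 (sp I) = 0.
Proof. by case=> /(congr1 (fun z => q0 (sp z))); rewrite sot_real /=; lra. Qed.

Lemma SA_sonr I : SA I -> sonr I = 1.
Proof. by case=> _; rewrite son_real => /(congr1 (fun z => q0 (sp z))). Qed.

Lemma SA_conj I : SA I -> soconj I = soopp I.
Proof. by case=> h _; rewrite soconj_sot h soadd0l. Qed.

Lemma SA_intro I : q0 (sp I) = 0 -> sonr I = 1 -> SA I.
Proof. by move=> h1 h2; split; rewrite ?sot_real ?h1 ?addr0 ?soreal0 // son_real h2. Qed.

Lemma SA_neq0 I : SA I -> I <> sozero R.
Proof. by move=> /SA_sonr + I0; rewrite I0 sonr0; lra. Qed.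

Lemma SA_opp I : SA I -> SA (soopp I).
Proof. by move=> h; apply: SA_intro; rewrite ?sonrN ?SA_sonr //= SA_re ?oppr0. Qed.

Lemma SA_sqr I : SA I -> somul I I = soreal (-1).
Proof. by case=> h1 h2; rewrite somul_sqr h1 h2; so_ring. Qed.

Lemma SA_mul_eq0 J c : SA J -> somul J c = sozero R -> c = sozero R.
Proof.
move=> hJ Jc; have : somul J (somul J c) = soopp c.
  by rewrite somul_altl SA_sqr // somul_reall soscaleN1.
by rewrite Jc somul0r => /(congr1 (@soopp R)); rewrite sooppK soopp0.
Qed.

Lemma SA_realD_eq0 r s I : SA I ->
  soadd (soreal r) (soscale s I) = sozero R -> r = 0 /\ s = 0.
Proof.
move=> hI h; have r0 : r = 0.
  have := congr1 (fun z => q0 (sp z)) h.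
  by rewrite re_soadd re_soscale (SA_re hI) mulr0 addr0.
split=> //; move: h; rewrite r0 soreal0 soadd0l => h.
by apply/eqP; apply: contraT => s0; case: (SA_neq0 hI (soscale_eq0 s0 h)).
Qed.

Lemma re_sopt a b x : q0 (sp (sopt a b x)) = a + b * q0 (sp x).
Proof. so_ring. Qed.

Lemma sonr_sopt a b I : SA I -> sonr (sopt a b I) = a ^+ 2 + b ^+ 2.
Proof.
have -> : sonr (sopt a b I) = a ^+ 2 + a * b * (q0 (sp I) + q0 (sp I)) + b ^+ 2 * sonr I.
  by so_ring.
by move=> hI; rewrite SA_re ?SA_sonr // addr0 mulr0 addr0 mulr1.
Qed.

Lemma soim_sopt a b I : SA I -> soim (sopt a b I) = soscale b I.
Proof.
move=> /SA_re; rewrite /soim /sore /sot; destruct_so => /= ->.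
by apply: so_ext; apply: quat_ext => /=; field.
Qed.

Lemma sore_sopt a b I : SA I -> sore (sopt a b I) = soreal a.
Proof.
move=> /SA_re; rewrite /sore /sot; destruct_so => /= ->.
by apply: so_ext; apply: quat_ext => /=; field.
Qed.

Lemma soconj_sopt a b I : SA I -> soconj (sopt a b I) = sopt a b (soopp I).
Proof. by move=> /SA_conj hI; rewrite /sopt -hI; so_ring. Qed.

Lemma is_real_sopt a b I : SA I -> is_real_so (sopt a b I) <-> b = 0.
Proof.
move=> hI; split=> [[r hr]|->]; last by exists a; so_ring.
have [//|hb] := eqVneq b 0; case: (SA_neq0 hI).
have EI : I = soreal (b^-1 * (r - a)).
  have -> : I = soscale b^-1 (soadd (sopt a b I) (soopp (soreal a))).
    by rewrite -[I in LHS]soscale1 -(mulVf hb) -soscaleA; so_ring.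
  by rewrite hr; so_ring.
have k0 : b^-1 * (r - a) = 0 by rewrite -(SA_re hI) EI.
by rewrite EI k0 soreal0.
Qed.
End ImaginaryUnits.

Definition SAroots (R : realType) (E C : so R) :=
  [set I | SA I /\ soadd E (somul I C) = sozero R].

Section SliceOnSphere.
Variable R : realType.
Implicit Types (G : R -> R -> soC R) (a b : R) (I : so R).

Lemma stem_im0 G a : G a (- 0) = ACbar (G a 0) -> (G a 0).2 = sozero R.
Proof. by move/(congr1 snd) => /= h; apply: soeqN_eq0; rewrite -h oppr0. Qed.

Lemma sliceI_sopt G a b I : SA I -> G a (- b) = ACbar (G a b) ->
  sliceI G (sopt a b I) = soadd (G a b).1 (somul I (G a b).2).
Proof.
move=> hI hG; rewrite /sliceI re_sopt SA_re // mulr0 addr0 sonr_sopt //.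
rewrite addrC addKr sqrtr_sqr soim_sopt // soscaleA.
have [b0|b0|b0] := ltrgt0P b.
- by rewrite mulVf ?soscale1 // gt_eqF.
- by rewrite hG /= invrN mulNr mulVf ?lt_eqF // soscaleN1 somulNl somulNr sooppK.
- by subst b; rewrite invr0 mul0r soscale0 (stem_im0 hG) !somul0r.
Qed.

Lemma stem_conj_at G a b : G a (- b) = ACbar (G a b) ->
  stem_conj G a (- b) = ACbar (stem_conj G a b).
Proof. by move=> hG; rewrite /stem_conj hG /ACconj /ACbar /= soconjN. Qed.

Lemma stem_mul_at G H a b : G a (- b) = ACbar (G a b) -> H a (- b) = ACbar (H a b) ->
  stem_mul G H a (- b) = ACbar (stem_mul G H a b).
Proof.
rewrite /stem_mul => -> ->; case: (G a b) (H a b) => [z1 z2] [w1 w2].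
by rewrite /ACmul /ACbar /=; congr pair; so_ring.
Qed.

Lemma sliceI_conj_sopt G a b I : SA I -> G a (- b) = ACbar (G a b) ->
  sliceI (stem_conj G) (sopt a b I) = soadd (soconj (G a b).1) (somul I (soconj (G a b).2)).
Proof. by move=> hI /stem_conj_at /(sliceI_sopt hI). Qed.

Lemma sliceI_norm_sopt G a b I : SA I -> G a (- b) = ACbar (G a b) ->
  sliceI (stem_mul G (stem_conj G)) (sopt a b I) =
  soadd (soreal (sonr (G a b).1 - sonr (G a b).2)) (soscale (sopolar (G a b).1 (G a b).2) I).
Proof.
move=> hI hG; rewrite (sliceI_sopt hI (stem_mul_at hG (stem_conj_at hG))).
rewrite /stem_mul /stem_conj /ACmul /ACconj /= -somul_realr -sot_mul_conj.
by rewrite /sot /sosub soconjM soconjK; so_ring.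
Qed.

Lemma V_sphere (g : so R -> so R) a b E C :
    (forall I, SA I -> g (sopt a b I) = soadd E (somul I C)) ->
  V g `&` sphere a b = [set sopt a b I | I in SAroots E C].
Proof.
move=> hg; apply/seteqP; split=> [y [gy [I hI Iy]]|_ [I [hI hz] <-]].
  by exists I; rewrite // /SAroots /= -hg // Iy.
by split; [rewrite /V /= hg | exists I].
Qed.
End SliceOnSphere.

Definition SAroot (R : realType) (E C : so R) :=
  soscale (- (sonr C)^-1) (somul E (soconj C)).

Section Roots.
Variable R : realType.
Implicit Types (E C I : so R) (a b : R).

Lemma SAroots_cond E C I : SAroots E C I -> sonr E = sonr C /\ sopolar E C = 0.
Proof.
case=> hI /soadd_eq0 ->; rewrite sonrN sonrM SA_sonr // mul1r; split=> //.
have -> : sopolar (soopp (somul I C)) C = - sonr C * (q0 (sp I) + q0 (sp I)).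
  by rewrite /sopolar; so_ring.
by rewrite SA_re // addr0 mulr0.
Qed.

Lemma SAroots_eq0 E C : ~ (sonr E = sonr C /\ sopolar E C = 0) -> SAroots E C = set0.
Proof. by move=> hEC; apply/seteqP; split=> // I /SAroots_cond. Qed.

Lemma SAroots0r E : E <> sozero R -> SAroots E (sozero R) = set0.
Proof. by move=> hE; apply/seteqP; split=> // I [_]; rewrite somul0r soadd0r. Qed.

Lemma SAroots_set1 E C : sonr C != 0 -> sonr E = sonr C -> sopolar E C = 0 ->
  SAroots E C = [set SAroot E C].
Proof.
move=> hC hEC hpol; apply/seteqP; split=> I /=.
  case=> _ /soadd_eq0 ->; rewrite /SAroot somulNl somul_mulconj -soscaleN1 !soscaleA.
  by rewrite mulrN1 opprK mulVf ?soscale1.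
move=> ->; split; last first.
  by rewrite /SAroot somulZl somul_conjmul soscaleA mulNr mulVf //; so_ring.
apply: SA_intro; last by rewrite sonrZ sonrM sonr_conj hEC; field.
have reEC : q0 (sp (somul E (soconj C))) = 0.
  by have := congr1 (fun z => q0 (sp z)) (sot_mul_conj E C); rewrite sot_real hpol /=; lra.
by rewrite /SAroot re_soscale reEC mulr0.
Qed.

Lemma sopt_SAroot a b E C : b != 0 ->
  sopt a b (SAroot E C) = sosub (soreal a) (somul E (soinv (soscale b^-1 C))).
Proof. by move=> hb; rewrite soinvZ ?invr_eq0 // invrK /SAroot /soinv; so_ring. Qed.

Lemma sandwich_conj_root a b I C : q0 (sp I) = 0 -> sonr C != 0 -> b != 0 ->
  somul (somul (soinv (soscale b^-1 C)) (soconj (sopt a b I))) (soscale b^-1 C) =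
  sopt a b (SAroot (soconj (soopp (somul I C))) (soconj C)).
Proof.
move=> hI hc hb; rewrite soinvZ ?invr_eq0 // invrK /soinv /SAroot sonr_conj.
move: hI hc; destruct_so => /= hI hc; subst.
apply: so_ext; apply: quat_ext; rewrite /sonr /= in hc |- *; field; exact/andP.
Qed.
End Roots.

Definition qnorm (R : realType) (p : quat R) :=
  q0 p ^+ 2 + q1 p ^+ 2 + q2 p ^+ 2 + q3 p ^+ 2.
Definition qdot (R : realType) (p q : quat R) :=
  q0 p * q0 q + q1 p * q1 q + q2 p * q2 q + q3 p * q3 q.
Definition qdot_im (R : realType) (p q : quat R) :=
  q1 p * q1 q + q2 p * q2 q + q3 p * q3 q.

(* For c = p + lq with n(p) = n(q) != 0, [annQ p q Q] (Q in H) runs over the right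
   annihilator of c; reparametrizing by Q = X p^c q makes re (ann p q X) a multiple of
   re X. *)
Definition annQ (R : realType) (p q Q : quat R) :=
  SO (qscale (- (qnorm p)^-1) (qmul (qmul q (qconj Q)) (qconj p))) Q.
Definition ann (R : realType) (p q X : quat R) := annQ p q (qmul X (qmul (qconj p) q)).

Definition polar_vec (R : realType) (p q A B : quat R) :=
  qadd (qscale (qnorm q / qnorm p) (qmul (qmul (qconj p) (qconj A)) p))
       (qmul (qmul B (qconj q)) p).

Ltac quat_field := intros; destruct_so; try apply: so_ext; try apply: quat_ext;
  unfold sonr, ann, annQ, polar_vec, qnorm, qdot in *; simpl in *;
  field; repeat (apply/andP; split); try assumption.

Section Quaternions.
Variable R : realType.
Implicit Types (p q A B P Q X Y : quat R) (r s t : R).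

Lemma qnormM p q : qnorm (qmul p q) = qnorm p * qnorm q. Proof. rewrite /qnorm; so_ring. Qed.
Lemma qnorm_conj p : qnorm (qconj p) = qnorm p. Proof. rewrite /qnorm; so_ring. Qed.

Lemma qnorm_eq0 p : qnorm p = 0 -> p = qzero R.
Proof. by case: p => p0 p1 p2 p3; rewrite /qnorm /= => h; apply: quat_ext => /=; nra. Qed.

Lemma qnormD_real A t : q0 A = 0 -> qnorm (qadd A (Quat t 0 0 0)) = qnorm A + t ^+ 2.
Proof. by case: A => a0 a1 a2 a3 /= ->; rewrite /qnorm /=; ring. Qed.

Lemma sonr_SO A B : sonr (SO A B) = qnorm A - qnorm B. Proof. rewrite /qnorm; so_ring. Qed.

Lemma sopolar_SO A B P Q : sopolar (SO A B) (SO P Q) = 2 * (qdot A P - qdot B Q).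
Proof. rewrite /sopolar /qdot; so_ring. Qed.

Lemma ann_mul p q X : qnorm p != 0 -> qnorm q = qnorm p ->
  somul (ann p q X) (SO p q) = sozero R.
Proof.
move=> hp hpq; have -> : somul (ann p q X) (SO p q) =
    SO (qzero R) (qscale (1 - qnorm q / qnorm p) (qmul p (qmul X (qmul (qconj p) q)))).
  by quat_field.
by rewrite hpq divff // subrr; so_ring.
Qed.

Lemma ann_sonr p q X : qnorm p != 0 -> qnorm q = qnorm p -> sonr (ann p q X) = 0.
Proof.
move=> hp hpq; have -> : sonr (ann p q X) =
    qnorm (qmul X (qmul (qconj p) q)) * (qnorm q / qnorm p - 1) by quat_field.
by rewrite hpq divff // subrr mulr0.
Qed.

Lemma annQ_kernel p q P Q : qnorm p != 0 -> somul (SO P Q) (SO p q) = sozero R ->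
  SO P Q = annQ p q Q.
Proof.
move=> hp /(congr1 (@sp R)) /= hPQ; congr SO.
have -> : P = qscale ((qnorm p)^-1) (qmul (qmul P p) (qconj p)) by quat_field.
have -> : qmul P p = qopp (qmul q (qconj Q)).
  by move: hPQ; destruct_so; move=> [] *; apply: quat_ext => /=; lra.
so_ring.
Qed.

Lemma ann_re p q X : qnorm p != 0 -> q0 (sp (ann p q X)) = - qnorm q * q0 X.
Proof. by quat_field. Qed.

Lemma ann_polar p q A B X : qnorm p != 0 ->
  sopolar (SO A B) (ann p q X) = - 2 * qdot X (polar_vec p q A B).
Proof. by rewrite /ann /annQ sopolar_SO; quat_field. Qed.

Lemma annD p q r s X Y : ann p q (qadd (qscale r X) (qscale s Y)) =
  soadd (soscale r (ann p q X)) (soscale s (ann p q Y)).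
Proof. rewrite /ann /annQ; so_ring. Qed.

Lemma ann_eq0 p q X : qnorm p != 0 -> qnorm q != 0 -> ann p q X = sozero R -> X = qzero R.
Proof.
move=> hp hq /(congr1 (@sq R)) /= hX.
have -> : X = qscale ((qnorm p * qnorm q)^-1)
                (qmul (qmul X (qmul (qconj p) q)) (qconj (qmul (qconj p) q))).
  by clear hX; quat_field.
by rewrite hX; so_ring.
Qed.

Lemma ann_onto p q k : qnorm p != 0 -> qnorm q != 0 -> somul k (SO p q) = sozero R ->
  exists X, k = ann p q X.
Proof.
move=> hp hq; case: k => P Q /(annQ_kernel hp) ->.
exists (qscale ((qnorm p * qnorm q)^-1) (qmul Q (qconj (qmul (qconj p) q)))).
by congr annQ; quat_field.
Qed.
End Quaternions.

Definition im_perp (R : realType) (w X : quat R) := q0 X = 0 /\ qdot_im w X = 0.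

Section Plane.
Variable R : realType.
Implicit Types (p q A B X : quat R) (r s t : R).

(* If [polar_vec p q A B] were a real t n(p), then B q^c p = p^c (A + t) p;
   taking norms gives n(B) = n(A) + t^2, against n(A) - n(B) = 1. *)
Lemma polar_vec_im_neq0 p q A B : qnorm p != 0 -> qnorm q = qnorm p -> q0 A = 0 ->
  qnorm A - qnorm B = 1 ->
  ~ [/\ q1 (polar_vec p q A B) = 0, q2 (polar_vec p q A B) = 0 & q3 (polar_vec p q A B) = 0].
Proof.
move=> hp hpq hA hAB [h1 h2 h3].
set w := polar_vec p q A B; set t := q0 w / qnorm p.
have Ew : w = Quat (q0 w) 0 0 0 by apply: quat_ext.
have EB : qmul (qmul B (qconj q)) p = qmul (qmul (qconj p) (qadd A (Quat t 0 0 0))) p.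
  have -> : qmul (qmul (qconj p) (qadd A (Quat t 0 0 0))) p =
      qadd w (qmul (qmul (qconj p) A) p).
    by rewrite {1}Ew /t; move: hp; clear; quat_field.
  by rewrite /w /polar_vec hpq divff //; move: hA; clear; destruct_so => /= ->; so_ring.
have := congr1 (@qnorm R) EB; rewrite !qnormM !qnorm_conj hpq qnormD_real // => hn.
have {}hn : qnorm B = qnorm A + t ^+ 2.
  by apply: (mulIf hp); apply: (mulIf hp); rewrite hn; ring.
nra.
Qed.

Lemma im_perp_basis w : ~ [/\ q1 w = 0, q2 w = 0 & q3 w = 0] ->
  exists X1 X2, [/\ im_perp w X1, im_perp w X2,
    (forall r s, qadd (qscale r X1) (qscale s X2) = qzero R -> r = 0 /\ s = 0) &
    (forall X, im_perp w X -> exists r s, X = qadd (qscale r X1) (qscale s X2))].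
Proof.
case: w => w0 w1 w2 w3 /= hw; rewrite /im_perp /qdot_im /=.
have mul_eq0 k r : k != 0 -> r * k = 0 -> r = 0.
  by move=> hk /eqP; rewrite mulf_eq0 (negbTE hk) orbF => /eqP.
have [h1|h1] := eqVneq w1 0; last first.
  exists (Quat 0 (- w2) w1 0), (Quat 0 (- w3) 0 w1); split=> /=; try by split; ring.
    move=> r s [] _ _; rewrite !mulr0 addr0 add0r.
    by move=> /(mul_eq0 _ _ h1) -> /(mul_eq0 _ _ h1) ->.
  move=> [x0 x1 x2 x3] /= [-> hx]; exists (x2 / w1), (x3 / w1).
  have -> : x1 = - (w2 * x2 + w3 * x3) / w1 by apply: (mulIf h1); rewrite mulfVK //; lra.
  by apply: quat_ext => /=; field.
have [h2|h2] := eqVneq w2 0; last first.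
  exists (Quat 0 w2 (- w1) 0), (Quat 0 0 (- w3) w2); split=> /=; try by split; ring.
    move=> r s [] _ + _; rewrite !mulr0 addr0 add0r.
    by move=> /(mul_eq0 _ _ h2) -> /(mul_eq0 _ _ h2) ->.
  move=> [x0 x1 x2 x3] /= [-> hx]; exists (x1 / w2), (x3 / w2).
  have -> : x2 = - (w1 * x1 + w3 * x3) / w2 by apply: (mulIf h2); rewrite mulfVK //; lra.
  by apply: quat_ext => /=; field.
have h3 : w3 != 0 by apply/eqP => h3; apply: hw; split=> //; apply/eqP.
exists (Quat 0 w3 0 (- w1)), (Quat 0 0 w3 (- w2)); split=> /=; try by split; ring.
  move=> r s [] _ + + _; rewrite !mulr0 addr0 add0r.
  by move=> /(mul_eq0 _ _ h3) -> /(mul_eq0 _ _ h3) ->.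
move=> [x0 x1 x2 x3] /= [-> hx]; exists (x1 / w3), (x2 / w3).
have -> : x3 = - (w1 * x1 + w2 * x2) / w3 by apply: (mulIf h3); rewrite mulfVK //; lra.
by apply: quat_ext => /=; field.
Qed.

Lemma qdot_im_re0 w X : q0 X = 0 -> qdot X w = qdot_im w X.
Proof. by rewrite /qdot /qdot_im => ->; ring. Qed.

Lemma im_perpD w r s X Y : im_perp w X -> im_perp w Y ->
  im_perp w (qadd (qscale r X) (qscale s Y)).
Proof.
move=> [hX0 hX] [hY0 hY]; split; first by rewrite /= hX0 hY0 !mulr0 addr0.
have -> : qdot_im w (qadd (qscale r X) (qscale s Y)) = r * qdot_im w X + s * qdot_im w Y.
  by rewrite /qdot_im /=; ring.
by rewrite hX hY !mulr0 addr0.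
Qed.

Lemma SA_coset_param p q A B I : SA (SO A B) -> qnorm p != 0 -> qnorm q = qnorm p ->
  (SA I /\ somul I (SO p q) = somul (SO A B) (SO p q)) <->
  exists2 X, im_perp (polar_vec p q A B) X & I = soadd (SO A B) (ann p q X).
Proof.
move=> hI0 hp hpq; have hq : qnorm q != 0 by rewrite hpq.
have hA : q0 A = 0 := SA_re hI0.
have re_I X : q0 (sp (soadd (SO A B) (ann p q X))) = - qnorm q * q0 X.
  by rewrite re_soadd ann_re //= hA add0r.
have sonr_I X : q0 X = 0 ->
    sonr (soadd (SO A B) (ann p q X)) = 1 - 2 * qdot_im (polar_vec p q A B) X.
  by move=> hX; rewrite sonrD SA_sonr // ann_polar // ann_sonr // qdot_im_re0 // addr0 mulNr.
split=> [[hI hIc]|[X [hX0 hX] ->]].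
  have [X Ek] : exists X, sosub I (SO A B) = ann p q X.
    by apply: ann_onto; rewrite // somulBl hIc sosubrr.
  have EI : I = soadd (SO A B) (ann p q X) by rewrite -Ek sosubKC.
  exists X => //.
  have hX0 : q0 X = 0.
    move: (SA_re hI); rewrite EI re_I => /eqP; rewrite mulf_eq0 oppr_eq0 (negbTE hq) /=.
    by move/eqP.
  by split=> //; move: (SA_sonr hI); rewrite EI sonr_I //; lra.
split; last by rewrite somulDl ann_mul // soadd0r.
by apply: SA_intro; rewrite ?re_I ?sonr_I // ?hX0 ?hX; ring.
Qed.

Lemma SA_coset_plane I0 c : SA I0 -> c <> sozero R -> sonr c = 0 ->
  affine_2plane [set I | SA I /\ somul I c = somul I0 c].
Proof.
case: c => p q; case: I0 => A B hI0 hc0.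
rewrite sonr_SO => /eqP; rewrite subr_eq0 => /eqP hpq.
have hp : qnorm p != 0.
  by apply/eqP => hp; apply: hc0; rewrite (qnorm_eq0 hp) (qnorm_eq0 (etrans (esym hpq) hp)).
have hAB : qnorm A - qnorm B = 1 by rewrite -sonr_SO SA_sonr.
have [X1 [X2 [hX1 hX2 hind hspan]]] :=
  im_perp_basis (polar_vec_im_neq0 hp (esym hpq) (SA_re hI0) hAB).
exists (SO A B), (ann p q X1), (ann p q X2); split.
  move=> r s; rewrite -annD => /(ann_eq0 hp); rewrite -hpq => /(_ hp); exact: hind.
apply/seteqP; split=> [I|_ [r _ [s _ <-]]].
  case/(SA_coset_param _ hI0 hp (esym hpq)) => X /hspan [r [s ->]] ->.
  by exists r => //; exists s; rewrite // annD.
apply/(SA_coset_param _ hI0 hp (esym hpq)); exists (qadd (qscale r X1) (qscale s X2)).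
  exact: im_perpD.
by rewrite annD.
Qed.
End Plane.

Section RootPlanes.
Variable R : realType.
Implicit Types (E C I : so R) (a b : R).

Lemma affine_2plane_nonempty (S : set (so R)) : affine_2plane S -> exists y, S y.
Proof. by case=> p [u [v [_ ->]]]; exists p, 0 => //; exists 0; rewrite ?soscale0 ?soadd0r. Qed.

Lemma affine_2plane_sopt a b (S : set (so R)) : b != 0 -> affine_2plane S ->
  affine_2plane (sopt a b @` S).
Proof.
move=> hb [p [u [v [huv ->]]]]; exists (sopt a b p), (soscale b u), (soscale b v); split.
  move=> r s h; apply: huv; apply: (soscale_eq0 hb); rewrite -h; so_ring.
apply/seteqP; split=> [_ [_ [r _ [s _ <-]] <-]|_ [r _ [s _ <-]]].
  by exists r => //; exists s => //; so_ring.
exists (soadd p (soadd (soscale r u) (soscale s v))); first by exists r => //; exists s.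
so_ring.
Qed.

Lemma SAroots_coset E C I0 : SAroots E C I0 ->
  SAroots E C = [set I | SA I /\ somul I C = somul I0 C].
Proof.
case=> _ /soadd_eq0 ->; apply/seteqP; split=> I [hI h]; split=> //.
  by move/soadd_eq0/(congr1 (@soopp R)): h; rewrite !sooppK => ->.
by rewrite h soaddNl.
Qed.

Lemma SAroots_set0_or_plane a b E C : b != 0 -> C <> sozero R -> sonr C = 0 ->
  sopt a b @` SAroots E C = set0 \/ affine_2plane (sopt a b @` SAroots E C).
Proof.
move=> hb hC hCn; have [[I0 hI0]|none] := pselect (exists I, SAroots E C I).
  right; apply: affine_2plane_sopt => //.
  by rewrite (SAroots_coset hI0); exact: SA_coset_plane (proj1 hI0) hC hCn.
by left; apply/seteqP; split=> // y [I hI _]; apply: none; exists I.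
Qed.
End RootPlanes.

Section SphereZeros.
Variable R : realType.
Variables (a b : R) (J e c : so R) (f fc Nf : so R -> so R).
Hypotheses (hJ : SA J) (hc0 : b = 0 -> c = sozero R)
  (hf : forall I, SA I -> f (sopt a b I) = soadd e (somul I c))
  (hfc : forall I, SA I -> fc (sopt a b I) = soadd (soconj e) (somul I (soconj c)))
  (hN : forall I, SA I ->
     Nf (sopt a b I) = soadd (soreal (sonr e - sonr c)) (soscale (sopolar e c) I)).

Let x := sopt a b J.
Let Sx := sphere a b.
Let d := sph_deriv f x.

Lemma sphere_sub_VN : sonr e = sonr c -> sopolar e c = 0 -> Sx `<=` V Nf.
Proof.
by move=> hn hp _ [I hI <-]; rewrite /V /= hN // hn hp subrr soreal0 soscale0 soadd0l.
Qed.

Lemma VN_sphere_eq0 : ~ (sonr e = sonr c /\ sopolar e c = 0) -> V Nf `&` Sx = set0.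
Proof.
move=> hnp; apply/seteqP; split=> // y [+ [I hI Iy]].
rewrite -Iy /V /= hN // => /(SA_realD_eq0 hI) [hn hp].
by apply: hnp; split=> //; apply/eqP; rewrite -subr_eq0 hn.
Qed.

Lemma sph_deriv_sphere : b != 0 -> d = soscale b^-1 c.
Proof.
move=> hb; rewrite /d /sph_deriv /x soim_sopt // soconj_sopt // hf // (hf (SA_opp hJ)).
rewrite soinvZ // /soinv SA_sonr // invr1 soscale1 SA_conj // somulNl sosub_pm.
rewrite somulZl somulZr somulNl somul_altl SA_sqr // somul_reall -!soscaleN1 !soscaleA.
by congr soscale; field.
Qed.

Lemma sph_value_sphere : sph_value f x = e.
Proof.
rewrite /sph_value /x soconj_sopt // hf // (hf (SA_opp hJ)) somulNl soadd_pm.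
by rewrite soscaleA mulVf ?soscale1 // pnatr_eq0.
Qed.

Lemma nonreal_center : ~ is_real_so x <-> b != 0.
Proof. by rewrite /x is_real_sopt //; split=> [/eqP|/eqP]. Qed.

Lemma sph_deriv_eq0 : b != 0 -> d = sozero R <-> c = sozero R.
Proof.
move=> hb; rewrite sph_deriv_sphere //.
by split=> [/(soscale_eq0 (invr_neq0 hb))|->]; rewrite ?soscalex0.
Qed.

Lemma son_sph_deriv_eq0 : b != 0 -> son d = sozero R <-> sonr c = 0.
Proof.
move=> hb; rewrite sph_deriv_sphere // son_eq0 sonrZ.
split=> [/eqP|->]; last by rewrite mulr0.
by rewrite mulf_eq0 expf_eq0 invr_eq0 (negbTE hb) andbF => /eqP.
Qed.

Lemma sphere_zeros_cases :
  V f `&` Sx = set0 \/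
  (exists y, [/\ ~ is_real_so x, V f `&` Sx = [set y], son d <> sozero R
                & y = sosub (sore x) (somul (sph_value f x) (soinv d))]) \/
  [/\ ~ is_real_so x, affine_2plane (V f `&` Sx), d <> sozero R & son d = sozero R] \/
  (Sx `<=` V f /\ (~ is_real_so x -> d = sozero R)).
Proof.
rewrite /Sx (V_sphere hf).
have [c0|hc] := pselect (c = sozero R).
  have [e0|he] := pselect (e = sozero R); last by left; rewrite c0 SAroots0r // image_set0.
  right; right; right; split=> [_ [I hI <-]|/nonreal_center hb].
    by rewrite /V /= hf // e0 c0 somul0r soadd0l.
  exact/(sph_deriv_eq0 hb).
have hb : b != 0 by apply/eqP => /hc0.
have hx : ~ is_real_so x by apply/nonreal_center.
have [cn0|hcn] := pselect (sonr c = 0).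
  case: (SAroots_set0_or_plane a e hb hc cn0) => [->|hpl]; first by left.
  by right; right; left; split; rewrite ?(sph_deriv_eq0 hb) ?(son_sph_deriv_eq0 hb).
have [[hn hp]|hnp] := pselect (sonr e = sonr c /\ sopolar e c = 0); last first.
  by left; rewrite SAroots_eq0 // image_set0.
right; left; exists (sopt a b (SAroot e c)); split=> //.
- by rewrite SAroots_set1 ?image_set1 //; apply/eqP.
- by rewrite (son_sph_deriv_eq0 hb).
- by rewrite sph_value_sphere sph_deriv_sphere // /x sore_sopt // sopt_SAroot.
Qed.

Lemma sphere_zeros_empty :
  V f `&` Sx = set0 ->
  (V Nf `&` Sx = set0 /\ V fc `&` Sx = set0) \/
  (Sx `<=` V Nf /\ (V fc `&` Sx = set0 \/ affine_2plane (V fc `&` Sx))).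
Proof.
rewrite /Sx (V_sphere hf) (V_sphere hfc) => /image_set0_set0 Z0.
have [[hn hp]|hnp] := pselect (sonr e = sonr c /\ sopolar e c = 0); last first.
  left; split; first exact: VN_sphere_eq0.
  by rewrite SAroots_eq0 ?image_set0 // !sonr_conj sopolar_conj.
right; split; first exact: sphere_sub_VN.
have [c0|hc] := pselect (c = sozero R).
  left; rewrite c0 soconj0 SAroots0r ?image_set0 // => /soconj_eq0 e0.
  have : SAroots e c J by split; rewrite // e0 c0 somul0r soadd0l.
  by rewrite Z0.
have hb : b != 0 by apply/eqP => /hc0.
have [cn0|hcn] := pselect (sonr c = 0).
  by apply: SAroots_set0_or_plane; rewrite ?sonr_conj // => /soconj_eq0.
have : SAroots e c (SAroot e c) by rewrite SAroots_set1 //; apply/eqP.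
by rewrite Z0.
Qed.

Lemma sphere_zeros_point y :
  [/\ ~ is_real_so x, V f `&` Sx = [set y], son d <> sozero R
    & y = sosub (sore x) (somul (sph_value f x) (soinv d))] ->
  Sx `<=` V Nf /\ V fc `&` Sx = [set somul (somul (soinv d) (soconj y)) d].
Proof.
case=> /nonreal_center hb hVf /[dup] hd /(son_sph_deriv_eq0 hb) /eqP hcn _.
have : (V f `&` Sx) y by rewrite hVf.
rewrite /Sx (V_sphere hf) => -[I0 hI0 <-]; have [hn hp] := SAroots_cond hI0.
split; first exact: sphere_sub_VN.
rewrite (V_sphere hfc) SAroots_set1 ?sonr_conj ?sopolar_conj // image_set1.
case: hI0 => /SA_re hI0 /soadd_eq0 ->.
by rewrite sph_deriv_sphere // sandwich_conj_root.
Qed.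

Lemma sphere_zeros_plane :
  [/\ ~ is_real_so x, affine_2plane (V f `&` Sx), d <> sozero R & son d = sozero R] ->
  Sx `<=` V Nf /\ (V fc `&` Sx = set0 \/ affine_2plane (V fc `&` Sx)).
Proof.
case=> /nonreal_center hb /affine_2plane_nonempty [y].
rewrite /Sx (V_sphere hf) (V_sphere hfc) (sph_deriv_eq0 hb) (son_sph_deriv_eq0 hb).
move=> [I0 /SAroots_cond [hn hp] _] c0 cn0.
split; first exact: sphere_sub_VN.
by apply: SAroots_set0_or_plane; rewrite ?sonr_conj // => /soconj_eq0.
Qed.

Lemma sphere_zeros_all :
  Sx `<=` V f /\ (~ is_real_so x -> d = sozero R) -> Sx `<=` V fc /\ Sx `<=` V Nf.
Proof.
case=> hsub _.
have /soadd_eq0 eJ : soadd e (somul J c) = sozero R.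
  by rewrite -hf //; apply: (hsub (sopt a b J)); exists J.
have /soadd_eq0 enJ : soadd e (somul (soopp J) c) = sozero R.
  rewrite -(hf (SA_opp hJ)); apply: (hsub (sopt a b (soopp J))).
  by exists (soopp J) => //; exact: SA_opp.
have Jc0 : somul J c = sozero R by apply: soeqN_eq0; rewrite -eJ enJ somulNl sooppK.
have c0 := SA_mul_eq0 hJ Jc0.
have e0 : e = sozero R by rewrite eJ Jc0 soopp0.
split=> _ [I hI <-]; rewrite /V /= ?hfc ?hN // e0 c0.
  by rewrite soconj0 somul0r soadd0l.
by rewrite sonr0 subrr sopolar0 soreal0 soscale0 soadd0l.
Qed.
End SphereZeros.

Theorem proposition4p9 (R : realType) (D : set (R * R)) (F : R -> R -> soC R)
  (a b : R) (J : so R) :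
  D !=set0 -> conj_invariant D -> stem D F ->
  D (a, b) -> SA J ->
  let x := sopt a b J in
  let f := sliceI F in
  let fc := sliceI (stem_conj F) in
  let Nf := sliceI (stem_mul F (stem_conj F)) in
  let Sx := sphere a b in
  let d := sph_deriv f x in
  let case1 := V f `&` Sx = set0 in
  let case2 y := [/\ ~ is_real_so x, V f `&` Sx = [set y], son d <> sozero R
                   & y = sosub (sore x) (somul (sph_value f x) (soinv d))] in
  let case3 := [/\ ~ is_real_so x, affine_2plane (V f `&` Sx),
                   d <> sozero R & son d = sozero R] in
  let case4 := Sx `<=` V f /\ (~ is_real_so x -> d = sozero R) in
  (case1 \/ (exists y, case2 y) \/ case3 \/ case4) /\
  (case1 ->
     (V Nf `&` Sx = set0 /\ V fc `&` Sx = set0) \/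
     (Sx `<=` V Nf /\ (V fc `&` Sx = set0 \/ affine_2plane (V fc `&` Sx)))) /\
  (forall y, case2 y ->
     Sx `<=` V Nf /\
     V fc `&` Sx = [set somul (somul (soinv d) (soconj y)) d]) /\
  (case3 ->
     Sx `<=` V Nf /\ (V fc `&` Sx = set0 \/ affine_2plane (V fc `&` Sx))) /\
  (case4 -> Sx `<=` V fc /\ Sx `<=` V Nf).
Proof.
move=> _ _ stemF Dab hJ x f fc Nf Sx d case1 case2 case3 case4.
have hF := stemF a b Dab.
have hc0 : b = 0 -> (F a b).2 = sozero R by move=> b0; move: hF; rewrite b0; exact: stem_im0.
have hf I (hI : SA I) := sliceI_sopt hI hF.
have hfc I (hI : SA I) := sliceI_conj_sopt hI hF.
have hN I (hI : SA I) := sliceI_norm_sopt hI hF.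
split; first exact: sphere_zeros_cases hJ hc0 hf.
split; first exact: sphere_zeros_empty hJ hc0 hf hfc hN.
split; first by move=> y hy; exact: (sphere_zeros_point hJ hf hfc hN hy).
split; first exact: sphere_zeros_plane hJ hf hfc hN.
exact: sphere_zeros_all hJ hf hfc hN.
Qed.
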